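(* Let an instance of the UDODOSP with exact requests $r^d:=r_l^d=r_u^d$ be given and set $R^d=\sum_{i=1}^d r^i$ for $0\le d\le D$ (so $R^0=0$). If the instance is feasible, then $R^D\le N U_w$; $\;N D-R^D\le N U_o$; $\;R^{d+u_w}-R^{d-1}\le N u_w$ for all $1\le d\le D-u_w$; and $\;R^{d+u_o}-R^{d-1}\ge N$ for all $1\le d\le D-u_o$.
   Context: An instance of the Days On Days Off Scheduling Problem (DODOSP) consists of integers $D\ge 1$ (days), $N\ge 1$ (workers), bounds $l_w,u_w,l_o,u_o,U_w,U_o\in\mathbb{N}$, and for each day $d\in\{1,\dots,D\}$ integers $0\le r_l^d\le r_u^d\le N$. A schedule is a map $f:\{n_1,\dots,n_N\}\times\{1,\dots,D\}\to\{\mathrm{ON},\mathrm{OFF}\}$ (not cyclic). A work period (resp. off period) of a worker is an inclusion-wise maximal set of consecutive days on which the worker is ON (resp. OFF). A schedule is feasible if on every day $d$ the number of workers that are ON lies in $[r_l^d,r_u^d]$, every work period has length between $l_w$ and $u_w$, every off period has length between $l_o$ and $u_o$, every worker is ON on at most $U_w$ days and OFF on at most $U_o$ days. An instance is feasible if a feasible schedule exists. The UDODOSP is the DODOSP restricted to instances with $l_w=l_o=1$. *)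

From mathcomp Require Import all_boot.
Set Implicit Arguments. Unset Strict Implicit. Unset Printing Implicit Defensive.

(* Days are 1..D, workers are 0..N-1.  A schedule is f : worker -> day -> bool,
   with true = ON and false = OFF (values outside the ranges are irrelevant). *)

Definition is_period (g : nat -> bool) (v : bool) (D a b : nat) : Prop :=
  1 <= a /\ a <= b /\ b <= D /\
  (forall d, a <= d <= b -> g d = v) /\
  (a = 1 \/ g a.-1 = ~~ v) /\
  (b = D \/ g b.+1 = ~~ v).

Definition feasible_schedule (D N lw uw lo uo Uw Uo : nat) (rl ru : nat -> nat)
    (f : nat -> nat -> bool) : Prop :=
  [/\ (forall d, 1 <= d <= D ->
         rl d <= \sum_(n < N) (f n d : nat) <= ru d),
      (forall n, n < N -> forall a b, is_period (f n) true D a b ->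
         lw <= b - a + 1 <= uw),
      (forall n, n < N -> forall a b, is_period (f n) false D a b ->
         lo <= b - a + 1 <= uo),
      (forall n, n < N -> \sum_(1 <= d < D.+1) (f n d : nat) <= Uw) &
      (forall n, n < N -> \sum_(1 <= d < D.+1) (~~ f n d : nat) <= Uo)].

Definition feasible_instance (D N lw uw lo uo Uw Uo : nat) (rl ru : nat -> nat) : Prop :=
  exists f, feasible_schedule D N lw uw lo uo Uw Uo rl ru f.

Definition cumreq (r : nat -> nat) (d : nat) : nat := \sum_(1 <= i < d.+1) r i.

From mathcomp Require Import all_boot zify.
Set Implicit Arguments. Unset Strict Implicit. Unset Printing Implicit Defensive.

(* Summing the schedule over workers turns cumulative requests into numbers of
   worker-days ON.  Each worker works at most Uw and rests at most Uo of the D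
   days, which gives the two global bounds.  A window of uw + 1 consecutive
   days cannot lie inside one work period, so every worker is OFF on one of
   these days and works at most uw of them; dually, every window of uo + 1
   days contains an ON day of each worker. *)

Lemma constant_block_in_period (g : nat -> bool) (v : bool) D a b :
  1 <= a -> a <= b -> b <= D -> (forall d, a <= d <= b -> g d = v) ->
  exists a' b', [/\ a' <= a, b <= b' & is_period g v D a' b'].
Proof.
move=> a_pos le_ab le_bD const_ab.
(* Take the largest right end, then the smallest left end, of a constant block
   containing [a, b]: extremality is exactly maximality of the period. *)
pose constant_on x y := all (fun d => g d == v) (index_iota x y.+1).
have constP x y : reflect (forall d, x <= d <= y -> g d = v) (constant_on x y).
  apply: (iffP allP) => H d Hd.
    by apply/eqP/H; rewrite mem_index_iota ltnS.
  by rewrite H //; move: Hd; rewrite mem_index_iota ltnS.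
have neq_negb x : x != v -> x = ~~ v by case: x; case: (v).
have exR : exists y, (y <= D) && constant_on a y by exists b; rewrite le_bD; apply/constP.
have ubR y : (y <= D) && constant_on a y -> y <= D by case/andP.
case: (ex_maxnP exR ubR) => b' /andP[le_b'D /constP const_ab'] max_b'.
have le_bb' : b <= b' by apply: max_b'; rewrite le_bD; apply/constP.
have exL : exists x, (0 < x) && constant_on x b' by exists a; rewrite a_pos; apply/constP.
case: (ex_minnP exL) => a' /andP[a'_pos /constP const_a'b'] min_a'.
have le_a'a : a' <= a by apply: min_a'; rewrite a_pos; apply/constP.
exists a', b'; split=> //; do !split=> //; first lia.
- have [->|a'_ne1] := eqVneq a' 1; [by left | right].
  apply: neq_negb; apply/negP => /eqP g_pred.
  have const_ext : constant_on a'.-1 b'.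
    by apply/constP => d Hd; have [->//|ne_d] := eqVneq d a'.-1; apply: const_a'b'; lia.
  by have := min_a' a'.-1; rewrite const_ext andbT; lia.
- have [->|b'_neD] := eqVneq b' D; [by left | right].
  apply: neq_negb; apply/negP => /eqP g_succ.
  have const_ext : constant_on a b'.+1.
    by apply/constP => d Hd; have [->//|ne_d] := eqVneq d b'.+1; apply: const_ab'; lia.
  by have := max_b' b'.+1; rewrite const_ext andbT; lia.
Qed.

Lemma window_meets_negb (g : nat -> bool) (v : bool) D u d :
  (forall a b, is_period g v D a b -> b - a + 1 <= u) ->
  1 <= d -> d + u <= D ->
  exists2 x, x \in index_iota d (d + u).+1 & g x = ~~ v.
Proof.
move=> short d_pos window_le.
have [/hasP[x x_in /eqP g_x] | /hasPn none] :=
  boolP (has (fun x => g x == ~~ v) (index_iota d (d + u).+1)); first by exists x.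
have const x : d <= x <= d + u -> g x = v.
  move=> x_range; have := none x; rewrite mem_index_iota ltnS => /(_ x_range).
  by case: (g x); case: (v).
have [a [b [le_ad le_b period]]] := constant_block_in_period d_pos (leq_addr u d) window_le const.
by have := short a b period; lia.
Qed.

Lemma count_lt_size (T : eqType) (a : pred T) s x :
  x \in s -> ~~ a x -> count a s < size s.
Proof.
move=> s_x not_ax; rewrite -(count_predC a s) -addn1 leq_add2l -has_count.
by apply/hasP; exists x.
Qed.

Lemma sum_nat_of_bool_count (T : Type) (s : seq T) (a : pred T) :
  \sum_(x <- s) (a x : nat) = count a s.
Proof. by rewrite -sum1_count [RHS]big_mkcond. Qed.

Lemma sum_ord_const N c : \sum_(n < N) c = N * c.
Proof. by rewrite big_const_ord iter_addn_0 mulnC. Qed.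

Lemma cumreq_sub (r : nat -> nat) d e :
  1 <= d <= e.+1 -> cumreq r e - cumreq r d.-1 = \sum_(d <= i < e.+1) r i.
Proof.
move=> /andP[d_pos le_de].
by rewrite /cumreq prednK // (big_cat_nat d_pos le_de) /= addKn.
Qed.

Section FeasibleSchedule.

Variables (D N uw uo Uw Uo : nat) (r : nat -> nat) (f : nat -> nat -> bool).
Hypothesis feas : feasible_schedule D N 1 uw 1 uo Uw Uo r r f.

Lemma requests_sum_window d e : 1 <= d -> e <= D ->
  \sum_(d <= i < e.+1) r i = \sum_(n < N) count (f n) (index_iota d e.+1).
Proof.
case: feas => requests _ _ _ _ d_pos le_eD.
transitivity (\sum_(d <= i < e.+1) \sum_(n < N) (f n i : nat)).
  by apply: eq_big_nat => i range_i; apply/eqP; rewrite eqn_leq; apply: requests; lia.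
by rewrite exchange_big; apply: eq_bigr => n _; rewrite sum_nat_of_bool_count.
Qed.

Lemma cumreq_le_work : cumreq r D <= N * Uw.
Proof.
case: feas => _ _ _ work_total _.
rewrite /cumreq requests_sum_window // -sum_ord_const.
by apply: leq_sum => n _; rewrite -sum_nat_of_bool_count; apply: work_total.
Qed.

Lemma days_minus_cumreq_le : N * D - cumreq r D <= N * Uo.
Proof.
case: feas => _ _ _ _ rest_total.
set days := index_iota 1 D.+1.
have worker_days : N * D = \sum_(n < N) count (f n) days + \sum_(n < N) count (predC (f n)) days.
  rewrite -big_split /= -sum_ord_const; apply: eq_bigr => n _.
  by rewrite count_predC /days size_iota subn1.
rewrite /cumreq requests_sum_window // worker_days addKn -sum_ord_const.
by apply: leq_sum => n _; rewrite -sum_nat_of_bool_count; apply: rest_total.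
Qed.

Lemma work_in_window_le n d : n < N -> 1 <= d -> d + uw <= D ->
  count (f n) (index_iota d (d + uw).+1) <= uw.
Proof.
case: feas => _ work_length _ _ _ lt_nN d_pos window_le.
have short a b : is_period (f n) true D a b -> b - a + 1 <= uw.
  by move/(work_length n lt_nN)/andP => [].
have [x x_in off_x] := window_meets_negb short d_pos window_le.
have := count_lt_size x_in (negbT off_x).
by rewrite size_iota -addnS addKn.
Qed.

Lemma work_in_window_gt0 n d : n < N -> 1 <= d -> d + uo <= D ->
  0 < count (f n) (index_iota d (d + uo).+1).
Proof.
case: feas => _ _ days_minus_cumreq_length _ _ lt_nN d_pos window_le.
have short a b : is_period (f n) false D a b -> b - a + 1 <= uo.
  by move/(days_minus_cumreq_length n lt_nN)/andP => [].
have [x x_in on_x] := window_meets_negb short d_pos window_le.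
by rewrite -has_count; apply/hasP; exists x.
Qed.

Lemma cumreq_window_le d : 1 <= d <= D - uw ->
  cumreq r (d + uw) - cumreq r d.-1 <= N * uw.
Proof.
move=> /andP[d_pos le_d].
rewrite -sum_ord_const cumreq_sub ?requests_sum_window; [|lia..].
by apply: leq_sum => n _; apply: (work_in_window_le (ltn_ord n)); lia.
Qed.

Lemma cumreq_window_ge d : 1 <= d <= D - uo ->
  N <= cumreq r (d + uo) - cumreq r d.-1.
Proof.
move=> /andP[d_pos le_d].
rewrite -[leqLHS]muln1 -sum_ord_const cumreq_sub ?requests_sum_window; [|lia..].
by apply: leq_sum => n _; apply: (work_in_window_gt0 (ltn_ord n)); lia.
Qed.

End FeasibleSchedule.

Theorem lemma4p2 (D N uw uo Uw Uo : nat) (r : nat -> nat) :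
  1 <= D -> 1 <= N -> (forall d, 1 <= d <= D -> r d <= N) ->
  feasible_instance D N 1 uw 1 uo Uw Uo r r ->
  [/\ cumreq r D <= N * Uw,
      N * D - cumreq r D <= N * Uo,
      (forall d, 1 <= d <= D - uw -> cumreq r (d + uw) - cumreq r d.-1 <= N * uw) &
      (forall d, 1 <= d <= D - uo -> N <= cumreq r (d + uo) - cumreq r d.-1)].
Proof.
move=> _ _ _ [f feas]; split.
- exact: cumreq_le_work feas.
- exact: days_minus_cumreq_le feas.
- exact: cumreq_window_le feas.
- exact: cumreq_window_ge feas.
Qed.
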